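(* Define $h:\mathrm{T}^2\times\mathbb{R}^2\to[0,\infty]$ by $$h(\varepsilon,\vartheta):=\sup_{\zeta\in\mathbb{R}^2}\ \sup_{\tau\in\mathbb{R}^2}\Big\{(\varepsilon+\zeta\overset{s}{\otimes}\vartheta):(\tau\otimes\tau)\ \Big|\ (\mathrm{I}+\zeta\otimes\zeta):(\tau\otimes\tau)\le 1\Big\}.$$ Then $h$ equals the gauge $g_{\mathscr{C}}$ of the closed convex set $\mathscr{C}:=\{(\varepsilon,\vartheta)\in\mathrm{T}^2\times\mathbb{R}^2:\ \tfrac14\vartheta\otimes\vartheta+\varepsilon\preceq\mathrm{I}\}$. In particular, for every $\varepsilon\in\mathrm{T}^2$, $\vartheta\in\mathbb{R}^2$: $$h(\varepsilon,\vartheta)\le1\iff \tfrac14\,\vartheta\otimes\vartheta+\varepsilon\preceq\mathrm{I}.$$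
   Context: $\mathrm{T}^2$ denotes symmetric real $2\times2$ matrices; $A:B=\mathrm{tr}(A^\top B)$; $A\preceq B$ means $B-A$ is positive semi-definite; $\mathrm{I}$ is the identity; $a\overset{s}{\otimes}b=\frac12(a\otimes b+b\otimes a)$. For a closed convex set $K$ containing the origin, its gauge is $g_K(y)=\inf\{t\ge0: y\in tK\}$ (with $\inf\emptyset=+\infty$). *)

From HB Require Import structures.
From mathcomp Require Import all_boot all_order all_algebra.
From mathcomp Require Import all_classical all_reals.
From mathcomp Require Import ereal.
Set Implicit Arguments. Unset Strict Implicit. Unset Printing Implicit Defensive.
Import Order.TTheory GRing.Theory Num.Theory.
Local Open Scope ring_scope.
Local Open Scope classical_set_scope.

Section Defs.
Variable R : realType.

Definition sym2 (A : 'M[R]_2) : Prop := A^T = A.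

Definition frob (A B : 'M[R]_2) : R := \tr (A^T *m B).

Definition outer (a b : 'cV[R]_2) : 'M[R]_2 := a *m b^T.

Definition souter (a b : 'cV[R]_2) : 'M[R]_2 :=
  (2%:R)^-1 *: (outer a b + outer b a).

Definition psd (A : 'M[R]_2) : Prop :=
  forall v : 'cV[R]_2, 0 <= (v^T *m A *m v) 0 0.

Definition loewner_le (A B : 'M[R]_2) : Prop := psd (B - A).

(* h(eps, theta) as a supremum in [-oo, +oo] (it is >= 0 via tau = 0) *)
Definition h (eps : 'M[R]_2) (th : 'cV[R]_2) : \bar R :=
  ereal_sup [set x : \bar R | exists (z t : 'cV[R]_2),
               frob (1%:M + outer z z) (outer t t) <= 1 /\
               x = (frob (eps + souter z th) (outer t t))%:E].

Definition setCC : set ('M[R]_2 * 'cV[R]_2) :=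
  [set p | sym2 p.1 /\
           loewner_le ((4%:R)^-1 *: outer p.2 p.2 + p.1) 1%:M].

(* gauge of a set K of pairs: inf {t >= 0 : y in tK}, inf of empty = +oo *)
Definition gauge (K : set ('M[R]_2 * 'cV[R]_2)) (y : 'M[R]_2 * 'cV[R]_2)
  : \bar R :=
  ereal_inf [set t%:E | t in [set t : R | 0 <= t /\
              exists k, K k /\ y = (t *: k.1, t *: k.2)]].

End Defs.

From HB Require Import structures.
From mathcomp Require Import all_boot all_order all_algebra.
From mathcomp Require Import all_classical all_reals.
From mathcomp Require Import ereal.
From mathcomp Require Import ring lra.
Set Implicit Arguments. Unset Strict Implicit. Unset Printing Implicit Defensive.
Import Order.TTheory GRing.Theory Num.Theory.
Local Open Scope ring_scope.

(* Write [s = z . t].  The constraint [|t|^2 + s^2 <= 1] and the objective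
   [t . eps t + s (th . t)] defining [h] are both quadratic in the pair [(t, s)], so
   [h <= c] means [t . eps t + s (th . t) <= c (|t|^2 + s^2)] for all [t] and [s].
   Maximising the left side minus [c s^2] over [s] (at [s = th . t / (2c)]) turns
   this into [t . eps t + (th . t)^2 / (4c) <= c |t|^2], i.e. into
   [(eps, th) / c] lying in [C].  Hence [{h <= c} = c C] for [c > 0], which is the
   gauge identity, and [c = 1] is the second claim. *)

Section QuadraticForms.
Variables (R : comPzRingType) (n : nat).
Implicit Types (u v w : 'cV[R]_n) (A B : 'M[R]_n).

Definition dotv u v : R := (u^T *m v) 0 0.
Definition qform A v : R := (v^T *m A *m v) 0 0.

Lemma dotvE u v : dotv u v = \sum_i u i 0 * v i 0.
Proof. by rewrite /dotv mxE; apply: eq_bigr => i _; rewrite mxE. Qed.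

Lemma dotvC u v : dotv u v = dotv v u.
Proof. by rewrite !dotvE; apply: eq_bigr => i _; rewrite mulrC. Qed.

Lemma dotvZr a u v : dotv u (a *: v) = a * dotv u v.
Proof. by rewrite /dotv -scalemxAr mxE. Qed.

Lemma dotvZl a u v : dotv (a *: u) v = a * dotv u v.
Proof. by rewrite dotvC dotvZr dotvC. Qed.

Lemma dotv0l u : dotv 0 u = 0.
Proof. by rewrite /dotv trmx0 mul0mx mxE. Qed.

Lemma dotv0r u : dotv u 0 = 0.
Proof. by rewrite dotvC dotv0l. Qed.

Lemma qformD A B v : qform (A + B) v = qform A v + qform B v.
Proof. by rewrite /qform mulmxDr mulmxDl mxE. Qed.

Lemma qformB A B v : qform (A - B) v = qform A v - qform B v.
Proof. by rewrite /qform mulmxBr mulmxBl !mxE. Qed.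

Lemma qformZ a A v : qform (a *: A) v = a * qform A v.
Proof. by rewrite /qform -scalemxAr -scalemxAl mxE. Qed.

Lemma qformZv a A v : qform A (a *: v) = a ^+ 2 * qform A v.
Proof. by rewrite /qform !linearZ /= -!scalemxAl !mxE mulrA expr2. Qed.

Lemma qform0v A : qform A 0 = 0.
Proof. by rewrite /qform mulmx0 mxE. Qed.

Lemma qform1 v : qform 1%:M v = dotv v v.
Proof. by rewrite /qform mulmx1. Qed.

Lemma qform_tr A v : qform A^T v = qform A v.
Proof.
rewrite /qform.
have -> : v^T *m A^T *m v = (v^T *m A *m v)^T by rewrite !trmx_mul trmxK mulmxA.
by rewrite mxE.
Qed.

Lemma qform_rank1 u w v : qform (u *m w^T) v = dotv v u * dotv w v.
Proof.
by rewrite /qform /dotv !mulmxA -[_ *m w^T *m v]mulmxA [in LHS]mxE big_ord1.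
Qed.

End QuadraticForms.

Section RealQuadraticForms.
Variables (R : realFieldType) (n : nat).
Implicit Types v : 'cV[R]_n.

Lemma dotvv_ge0 v : 0 <= dotv v v.
Proof. by rewrite dotvE sumr_ge0 // => i _; rewrite -expr2 sqr_ge0. Qed.

Lemma dotvv_eq0 v : (dotv v v == 0) = (v == 0).
Proof.
apply/idP/eqP => [|->]; last by rewrite dotv0l.
rewrite dotvE => /eqP sum0; apply/matrixP => i j.
rewrite (ord1 j) mxE; apply/eqP; rewrite -[_ == 0]orbb -mulf_eq0; apply/eqP.
by apply: (psumr_eq0P _ sum0) => // k _; rewrite -expr2 sqr_ge0.
Qed.

End RealQuadraticForms.

Section ConstrainedMaximum.
Variables (R : rcfType) (n : nat) (A : 'M[R]_n) (th : 'cV[R]_n).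

Lemma objective_le_homogeneous (c : R) :
  (forall z t, dotv t t + dotv z t ^+ 2 <= 1 ->
     qform A t + dotv z t * dotv th t <= c) ->
  forall z t, qform A t + dotv z t * dotv th t <= c * (dotv t t + dotv z t ^+ 2).
Proof.
move=> obj_le z t; have [->|t_neq0] := eqVneq t 0.
  by rewrite qform0v !dotv0r !(mul0r, mulr0, add0r, expr0n).
set m := dotv t t + _.
have m_gt0 : 0 < m.
  have tt_gt0 : 0 < dotv t t by rewrite lt_def dotvv_eq0 t_neq0 dotvv_ge0.
  by rewrite /m; have := sqr_ge0 (dotv z t); lra.
pose l := (Num.sqrt m)^-1.
have l2 : l ^+ 2 = m^-1 by rewrite /l exprVn sqr_sqrtr // ltW.
have := obj_le z (l *: t); rewrite dotvZl !dotvZr qformZv.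
have -> : l * (l * dotv t t) + (l * dotv z t) ^+ 2 = l ^+ 2 * m by rewrite /m; ring.
have -> : l ^+ 2 * qform A t + l * dotv z t * (l * dotv th t)
        = l ^+ 2 * (qform A t + dotv z t * dotv th t) by ring.
rewrite l2 mulVf ?gt_eqF // lexx => /(_ isT).
by rewrite ler_pdivrMl // [c * m]mulrC.
Qed.

Lemma form_le_of_objective_le (c : R) : 0 < c ->
  (forall z t, dotv t t + dotv z t ^+ 2 <= 1 ->
     qform A t + dotv z t * dotv th t <= c) ->
  forall v, qform A v + dotv th v ^+ 2 / (4 * c) <= c * dotv v v.
Proof.
move=> c_gt0 /objective_le_homogeneous obj_le v.
have [->|v_neq0] := eqVneq v 0.
  by rewrite qform0v !dotv0r expr0n /= !(mul0r, mulr0, addr0).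
have vv_gt0 : 0 < dotv v v by rewrite lt_def dotvv_eq0 v_neq0 dotvv_ge0.
(* [k] maximises [s |-> s * dotv th v - c * s ^+ 2]. *)
pose k := dotv th v / (2 * c).
have := obj_le ((k / dotv v v) *: v) v; rewrite dotvZl mulfVK ?gt_eqF //.
have -> : dotv th v ^+ 2 / (4 * c) = k * dotv th v - c * k ^+ 2.
  by rewrite /k; field; rewrite gt_eqF.
lra.
Qed.

Lemma objective_le_of_form_le (c : R) : 0 < c ->
  (forall v, qform A v + dotv th v ^+ 2 / (4 * c) <= c * dotv v v) ->
  forall z t, dotv t t + dotv z t ^+ 2 <= 1 ->
    qform A t + dotv z t * dotv th t <= c.
Proof.
move=> c_gt0 form_le z t constraint.
have am_gm : dotv z t * dotv th t <= dotv th t ^+ 2 / (4 * c) + c * dotv z t ^+ 2.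
  have : 0 <= c * (dotv z t - dotv th t / (2 * c)) ^+ 2.
    by rewrite mulr_ge0 ?sqr_ge0 ?ltW.
  have -> : c * (dotv z t - dotv th t / (2 * c)) ^+ 2
    = dotv th t ^+ 2 / (4 * c) + c * dotv z t ^+ 2 - dotv z t * dotv th t.
    by field; rewrite gt_eqF.
  by rewrite subr_ge0.
have := form_le t; have : c * (dotv t t + dotv z t ^+ 2) <= c.
  by rewrite -[leRHS]mulr1 ler_pM2l.
nra.
Qed.

Lemma objective_le_iff_form_le (c : R) : 0 < c ->
  (forall z t, dotv t t + dotv z t ^+ 2 <= 1 ->
     qform A t + dotv z t * dotv th t <= c) <->
  (forall v, qform A v + dotv th v ^+ 2 / (4 * c) <= c * dotv v v).
Proof.
by move=> c_gt0; split; [apply: form_le_of_objective_le | apply: objective_le_of_form_le].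
Qed.

End ConstrainedMaximum.

Section TwoByTwo.
Variable R : realType.
Implicit Types (A eps : 'M[R]_2) (z th t v : 'cV[R]_2).

Lemma frob_outer A t : frob A (outer t t) = qform A t.
Proof.
rewrite /frob /outer mulmxA mxtrace_mulC mulmxA /mxtrace big_ord1.
exact: qform_tr.
Qed.

Lemma qform_souter z th t : qform (souter z th) t = dotv z t * dotv th t.
Proof.
rewrite /souter qformZ qformD /outer !qform_rank1 (dotvC t z) (dotvC t th).
by field.
Qed.

Lemma h_le_iff_objective eps th c :
  (h eps th <= c%:E)%E <->
  (forall z t, dotv t t + dotv z t ^+ 2 <= 1 ->
     qform eps t + dotv z t * dotv th t <= c).
Proof.
have constraintE z t :
    frob (1%:M + outer z z) (outer t t) = dotv t t + dotv z t ^+ 2.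
  by rewrite frob_outer qformD qform1 /outer qform_rank1 dotvC expr2.
have objectiveE z t : frob (eps + souter z th) (outer t t)
                      = qform eps t + dotv z t * dotv th t.
  by rewrite frob_outer qformD qform_souter.
split=> [/ereal_supP h_le z t zt_le1 | obj_le].
  by rewrite -lee_fin -objectiveE; apply: h_le; exists z, t; rewrite constraintE.
apply/ereal_supP => _ [z [t [zt_le1 ->]]].
by rewrite lee_fin objectiveE; apply: obj_le; rewrite -constraintE.
Qed.

Lemma h_ge0 eps th : (0%:E <= h eps th)%E.
Proof. by apply: ereal_sup_ubound; exists 0, 0; rewrite !frob_outer !qform0v ler01. Qed.

Lemma h00 : (h (0 : 'M[R]_2) 0 <= 0%:E)%E.
Proof.
apply/ereal_supP => _ [z [t [_ ->]]].
by rewrite frob_outer add0r qform_souter dotv0l mulr0.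
Qed.

Lemma loewner_le_iff_form eps th c : 0 < c ->
  loewner_le (4%:R^-1 *: outer (c^-1 *: th) (c^-1 *: th) + c^-1 *: eps) 1%:M <->
  (forall v, qform eps v + dotv th v ^+ 2 / (4 * c) <= c * dotv v v).
Proof.
move=> c_gt0.
have formE v :
    qform (1%:M - (4%:R^-1 *: outer (c^-1 *: th) (c^-1 *: th) + c^-1 *: eps)) v
    = c^-1 * (c * dotv v v - (qform eps v + dotv th v ^+ 2 / (4 * c))).
  rewrite qformB qformD !qformZ qform1 /outer qform_rank1 !dotvZl !dotvZr (dotvC v).
  by field; rewrite gt_eqF.
split=> [psd_c v | form_le v].
  by have := psd_c v; rewrite -/(qform _ v) formE pmulr_rge0 ?invr_gt0 // subr_ge0.
by rewrite -/(qform _ v) formE pmulr_rge0 ?invr_gt0 // subr_ge0.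
Qed.

Lemma h_le_iff eps th c : 0 < c ->
  (h eps th <= c%:E)%E <->
  loewner_le (4%:R^-1 *: outer (c^-1 *: th) (c^-1 *: th) + c^-1 *: eps) 1%:M.
Proof.
move=> c_gt0; apply: (iff_trans (h_le_iff_objective _ _ _)).
apply: (iff_trans (objective_le_iff_form_le _ _ c_gt0)).
by apply: iff_sym; apply: loewner_le_iff_form.
Qed.

Lemma gauge_eq_of_dilate (K : set ('M[R]_2 * 'cV[R]_2)) (y : 'M[R]_2 * 'cV[R]_2)
    (x : \bar R) :
  (0%:E <= x)%E ->
  (forall t : R, 0 <= t -> (exists k, K k /\ y = (t *: k.1, t *: k.2)) ->
     (x <= t%:E)%E) ->
  (forall t : R, 0 < t -> (x <= t%:E)%E ->
     exists k, K k /\ y = (t *: k.1, t *: k.2)) ->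
  gauge K y = x.
Proof.
move=> x_ge0 le_of_mem mem_of_le; apply/eqP; rewrite eq_le; apply/andP; split.
  case: x x_ge0 le_of_mem mem_of_le => [r | | //] r_ge0 _ mem_of_le; last exact: leey.
  rewrite lee_fin in r_ge0; apply/lee_addgt0Pr => e e_gt0.
  apply: ereal_inf_lbound; exists (r + e); last by rewrite EFinD.
  split; first lra.
  by apply: mem_of_le; rewrite ?lee_fin; lra.
by apply/ereal_infP => _ [t [t_ge0 y_mem] <-]; apply: le_of_mem.
Qed.

Lemma h_le_of_mem_dilate eps th (t : R) k : 0 <= t -> setCC k ->
  (eps, th) = (t *: k.1, t *: k.2) -> (h eps th <= t%:E)%E.
Proof.
move=> t_ge0 [_ k_le] [-> ->].
have [->|t_neq0] := eqVneq t 0; first by rewrite !scale0r; apply: h00.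
have t_gt0 : 0 < t by rewrite lt_def t_neq0.
by apply/h_le_iff => //; rewrite !scalerA mulVf // !scale1r.
Qed.

Lemma mem_dilate_of_h_le eps th (t : R) :
  0 < t -> sym2 eps -> (h eps th <= t%:E)%E ->
  setCC (t^-1 *: eps, t^-1 *: th) /\
  (eps, th) = (t *: (t^-1 *: eps), t *: (t^-1 *: th)).
Proof.
move=> t_gt0 eps_sym /h_le_iff-/(_ t_gt0) eps_le.
split; last by rewrite !scalerA mulfV ?gt_eqF // !scale1r.
by split=> //=; rewrite /sym2 linearZ /= eps_sym.
Qed.

End TwoByTwo.

Theorem proposition4p1 (R : realType) :
  (forall (eps : 'M[R]_2) (th : 'cV[R]_2), sym2 eps ->
     h eps th = gauge (@setCC R) (eps, th)) /\
  (forall (eps : 'M[R]_2) (th : 'cV[R]_2), sym2 eps ->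
     ((h eps th <= 1%:E)%E <->
      loewner_le ((4%:R)^-1 *: outer th th + eps) 1%:M)).
Proof.
split=> eps th eps_sym.
  symmetry; apply: gauge_eq_of_dilate; first exact: h_ge0.
    by move=> t t_ge0 [k [k_C y_eq]]; apply: h_le_of_mem_dilate y_eq.
  by move=> t t_gt0 h_le; eexists; apply: mem_dilate_of_h_le.
by have := h_le_iff eps th (@ltr01 R); rewrite invr1 !scale1r.
Qed.
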